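(* Let $N\ge 1$ and $K\ge 2$ be integers with $K$ even and $N$ divisible by $K$, put $m=N/K$, and let $\alpha\in[0,2]$. Let $S_0\subset S$ be the set of the $2m+1$ pure strategies $s^{(j)}=(j,\,2m-j,\,j,\,2m-j,\,\ldots,\,j,\,2m-j)'$ for $j=0,1,\ldots,2m$ (odd-indexed battlefields receive $j$, even-indexed battlefields receive $2m-j$). Then the mixed strategy that randomizes uniformly over $S_0$ is a symmetric equilibrium strategy of $\mathcal{B}_\alpha(N,K)$, and in the resulting equilibrium each player's expected payoff equals $\pi^*=K\cdot\frac{m+\alpha/2}{2m+1}$.
   Context: Fix integers $N\ge1$, $K\ge2$ and a real number $\alpha$. The Colonel Blotto game $\mathcal{B}_\alpha(N,K)$ is the two-player simultaneous-move game with players $A,B$, each with pure strategy set $S=\{s\in\{0,1,\ldots,N\}^K:\sum_{k=1}^K s_k=N\}$, in which the payoff of player $i$ at the pure profile $(s^i,s^{-i})$ is $\pi^i(s^i,s^{-i})=\sum_{k=1}^K\big(\mathbf 1[s^i_k>s^{-i}_k]+\tfrac{\alpha}{2}\mathbf 1[s^i_k=s^{-i}_k]\big)$ (here $-i$ denotes the opponent of $i$). Mixed strategies are probability distributions on $S$, and payoffs of mixed profiles are expected payoffs (players randomize independently). A Nash equilibrium is a mixed profile from which no player can raise her expected payoff by a unilateral deviation. A symmetric equilibrium strategy is a mixed strategy $\sigma$ such that $(\sigma,\sigma)$ is a Nash equilibrium. *)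

From HB Require Import structures.
From mathcomp Require Import all_boot all_order all_algebra.
From mathcomp Require Import reals.
Set Implicit Arguments. Unset Strict Implicit. Unset Printing Implicit Defensive.
Import Order.TTheory GRing.Theory Num.Theory.
Local Open Scope ring_scope.

Definition strat (N K : nat) :=
  {s : {ffun 'I_K -> 'I_N.+1} | (\sum_(k < K) (s k : nat))%N == N}.

Definition blotto_payoff (R : realType) (alpha : R) (N K : nat)
  (s t : strat N K) : R :=
  \sum_(k < K) (((val t k : nat) < (val s k : nat))%N%:R
                + alpha / 2 * ((val s k : nat) == (val t k : nat))%:R).

Definition is_mixed (R : realType) (N K : nat) (sigma : strat N K -> R) : Prop :=
  (forall s, 0 <= sigma s) /\ \sum_(s : strat N K) sigma s = 1.

Definition payoffA (R : realType) (alpha : R) (N K : nat)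
  (sigmaA sigmaB : strat N K -> R) : R :=
  \sum_(s : strat N K) \sum_(t : strat N K)
     sigmaA s * sigmaB t * blotto_payoff alpha s t.

Definition payoffB (R : realType) (alpha : R) (N K : nat)
  (sigmaA sigmaB : strat N K -> R) : R :=
  \sum_(s : strat N K) \sum_(t : strat N K)
     sigmaA s * sigmaB t * blotto_payoff alpha t s.

Definition nash_equilibrium (R : realType) (alpha : R) (N K : nat)
  (sigmaA sigmaB : strat N K -> R) : Prop :=
  is_mixed sigmaA /\ is_mixed sigmaB /\
  (forall tau, is_mixed tau -> payoffA alpha tau sigmaB <= payoffA alpha sigmaA sigmaB) /\
  (forall tau, is_mixed tau -> payoffB alpha sigmaA tau <= payoffB alpha sigmaA sigmaB).

Definition symmetric_equilibrium_strategy (R : realType) (alpha : R) (N K : nat)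
  (sigma : strat N K -> R) : Prop :=
  nash_equilibrium alpha sigma sigma.

(* S_0: the strategies s^(j), j = 0..2m: battlefield k (1-based) gets j if k is
   odd and 2m - j if k is even; with 0-based index k this means j if k is even. *)
Definition S0 (N K m : nat) : {set strat N K} :=
  [set s : strat N K | [exists j : 'I_(2 * m).+1, [forall k : 'I_K,
      (val s k : nat) == (if ~~ odd k then (j : nat) else (2 * m - j)%N)]]].

Definition uniform_on (R : realType) (N K : nat) (A : {set strat N K})
  (s : strat N K) : R :=
  if s \in A then (#|A|%:R)^-1 else 0.

From HB Require Import structures.
From mathcomp Require Import all_boot all_order all_algebra.
From mathcomp Require Import reals.
From mathcomp Require Import zify ring.
Import Order.TTheory GRing.Theory Num.Theory.
Local Open Scope ring_scope.

(* Against a pure reply t, summing over the 2m+1 strategies of S_0 on battlefield k,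
   t wins [min (2m+1) t_k] times and ties once if t_k <= 2m, since j and 2m - j both
   run through 0..2m.  Summed over k this is at most N + K alpha/2 = K (m + alpha/2),
   with equality when every t_k <= 2m, in particular for t in S_0.  So every pure
   strategy earns at most K (m + alpha/2)/(2m+1) against the uniform strategy on S_0,
   and every strategy of S_0 earns exactly that. *)

Section SymmetricBestReply.

Variables (R : realType) (alpha : R) (N K : nat).

Definition pure_payoff (sigma : strat N K -> R) (s : strat N K) : R :=
  \sum_t sigma t * blotto_payoff alpha s t.

Lemma payoffA_pure (x y : strat N K -> R) :
  payoffA alpha x y = \sum_s x s * pure_payoff y s.
Proof.
apply: eq_bigr => s _; rewrite mulr_sumr.
by apply: eq_bigr => t _; rewrite mulrA.
Qed.

Lemma payoffB_pure (x y : strat N K -> R) :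
  payoffB alpha x y = \sum_t y t * pure_payoff x t.
Proof.
rewrite /payoffB exchange_big; apply: eq_bigr => t _; rewrite mulr_sumr.
by apply: eq_bigr => s _; rewrite mulrA [x s * _]mulrC.
Qed.

Lemma mixed_average_le (tau V : strat N K -> R) (v : R) :
  is_mixed tau -> (forall s, V s <= v) -> \sum_s tau s * V s <= v.
Proof.
case=> tau_ge0 tau_sum1 V_le; apply: le_trans (_ : \sum_s tau s * v <= v).
  by apply: ler_sum => s _; apply: ler_wpM2l.
by rewrite -mulr_suml tau_sum1 mul1r.
Qed.

Lemma mixed_average_support (sigma V : strat N K -> R) (v : R) :
  is_mixed sigma -> (forall s, sigma s != 0 -> V s = v) ->
  \sum_s sigma s * V s = v.
Proof.
case=> _ sigma_sum1 V_supp; rewrite -[RHS]mul1r -sigma_sum1 mulr_suml.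
apply: eq_bigr => s _; have [-> | /V_supp -> //] := eqVneq (sigma s) 0.
by rewrite !mul0r.
Qed.

Lemma symmetric_equilibrium_of_best_reply (sigma : strat N K -> R) (v : R) :
  is_mixed sigma ->
  (forall s, pure_payoff sigma s <= v) ->
  (forall s, sigma s != 0 -> pure_payoff sigma s = v) ->
  [/\ symmetric_equilibrium_strategy alpha sigma,
      payoffA alpha sigma sigma = v & payoffB alpha sigma sigma = v].
Proof.
move=> sigma_mixed V_le V_supp.
have PA : payoffA alpha sigma sigma = v.
  by rewrite payoffA_pure; apply: mixed_average_support.
have PB : payoffB alpha sigma sigma = v by rewrite payoffB_pure -payoffA_pure.
split=> //; do 2!split=> //; split=> tau tau_mixed.
  by rewrite PA payoffA_pure; apply: mixed_average_le.
by rewrite PB payoffB_pure; apply: mixed_average_le.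
Qed.

End SymmetricBestReply.

Arguments pure_payoff {R} alpha {N K} sigma s.

Section Uniform.

Variables (R : realType) (N K : nat) (A : {set strat N K}).

Lemma sum_uniform_on (G : strat N K -> R) :
  \sum_s uniform_on R A s * G s = (#|A|%:R)^-1 * \sum_(s in A) G s.
Proof.
rewrite mulr_sumr [RHS]big_mkcond; apply: eq_bigr => s _.
by rewrite /uniform_on; case: (s \in A); rewrite ?mul0r ?mulr0.
Qed.

Lemma uniform_on_mixed : A != set0 -> is_mixed (uniform_on R A).
Proof.
move=> A_neq0; split=> [s | ].
  by rewrite /uniform_on; case: ifP => // _; rewrite invr_ge0 ler0n.
rewrite (eq_bigr (fun s => uniform_on R A s * 1)) => [|s _]; last by rewrite mulr1.
by rewrite sum_uniform_on sumr_const mulVf // pnatr_eq0 -lt0n card_gt0.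
Qed.

Lemma uniform_on_supp s : uniform_on R A s != 0 -> s \in A.
Proof. by rewrite /uniform_on; case: ifP; rewrite ?eqxx. Qed.

End Uniform.

Lemma sum_ord_ltn n x : (\sum_(j < n) ((j : nat) < x))%N = minn n x.
Proof.
elim: n => [|n IH]; first by rewrite big_ord0 min0n.
rewrite big_ord_recr /= IH; case: (ltnP n x) => h /=; lia.
Qed.

Lemma sum_ord_eq n x : (\sum_(j < n) (x == (j : nat)))%N = (x < n)%N.
Proof.
elim: n => [|n IH]; first by rewrite big_ord0.
rewrite big_ord_recr /= IH ltnS; case: (ltngtP x n) => h /=; lia.
Qed.

Lemma sum_ord_alternate (K a b : nat) : ~~ odd K ->
  (\sum_(k < K) (if ~~ odd k then a else b))%N = (K./2 * (a + b))%N.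
Proof.
move=> K_even.
have [h ->] : exists h, K = h.*2.
  by exists K./2; rewrite -{1}[K]odd_double_half (negbTE K_even) add0n.
rewrite doubleK; elim: h => [|h IH]; first by rewrite big_ord0.
rewrite doubleS !big_ord_recr /= IH /= odd_double /=; lia.
Qed.

Section AlternatingStrategies.

Variables (N K m : nat).
Hypotheses (KmN : (K * m)%N = N) (K_even : ~~ odd K) (K_gt0 : (0 < K)%N).

(* battlefields are 0-based, so the paper's odd battlefields are the even [k] *)
Definition alt_alloc (j k : nat) : nat := if ~~ odd k then j else (2 * m - j)%N.

Lemma alt_alloc_le j k : (j <= 2 * m)%N -> (alt_alloc j k <= 2 * m)%N.
Proof. by rewrite /alt_alloc; case: (odd k) => /=; lia. Qed.

Lemma alt_alloc_rev (R : realType) k (F : nat -> R) :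
  \sum_(j < (2 * m).+1) F (alt_alloc j k) = \sum_(j < (2 * m).+1) F j.
Proof.
rewrite /alt_alloc; case: (odd k) => //=.
rewrite [RHS](reindex_inj rev_ord_inj) /=; apply: eq_bigr => j _.
by rewrite subSS.
Qed.

Lemma sum_alt_alloc j : (j <= 2 * m)%N -> (\sum_(k < K) alt_alloc j k)%N = N.
Proof.
move=> j_le; rewrite sum_ord_alternate // subnKC // -KmN.
by rewrite -{2}[K]odd_double_half (negbTE K_even) add0n -muln2; lia.
Qed.

Lemma double_m_leq_N : (2 * m <= N)%N.
Proof.
rewrite -KmN leq_mul2r; apply/orP; right.
have K_neq1 : K != 1%N by apply: contraNneq K_even => ->.
lia.
Qed.

Definition alt_ffun (j : 'I_(2 * m).+1) : {ffun 'I_K -> 'I_N.+1} :=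
  [ffun k : 'I_K => inord (alt_alloc j k)].

Lemma alt_ffunE j k : (alt_ffun j k : nat) = alt_alloc j k.
Proof.
rewrite ffunE inordK // ltnS (leq_trans _ double_m_leq_N) //.
by rewrite alt_alloc_le // -ltnS.
Qed.

Lemma alt_ffun_sum j : (\sum_(k < K) (alt_ffun j k : nat))%N == N.
Proof.
rewrite (eq_bigr (fun k : 'I_K => alt_alloc j k)) => [|k _]; last exact: alt_ffunE.
by rewrite sum_alt_alloc // -ltnS.
Qed.

Definition alt_strat (j : 'I_(2 * m).+1) : strat N K :=
  exist _ (alt_ffun j) (alt_ffun_sum j).

Lemma alt_stratE j k : (val (alt_strat j) k : nat) = alt_alloc j k.
Proof. exact: alt_ffunE. Qed.

Lemma alt_strat_inj : injective alt_strat.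
Proof.
move=> i j /(congr1 (fun s : strat N K => (val s (Ordinal K_gt0) : nat))).
by rewrite !alt_stratE /alt_alloc /= => /ord_inj.
Qed.

Lemma S0_alt_strat : S0 N K m = [set alt_strat j | j : 'I_(2 * m).+1].
Proof.
apply/setP => s; rewrite inE; apply/existsP/imsetP => [[j /forallP s_j] | [j _ ->]].
  exists j => //; apply/val_inj/ffunP => k; apply/ord_inj.
  by rewrite (eqP (s_j k)) alt_stratE.
by exists j; apply/forallP => k; rewrite alt_stratE.
Qed.

Lemma card_S0 : #|S0 N K m| = (2 * m).+1.
Proof. by rewrite S0_alt_strat card_imset ?card_ord //; apply: alt_strat_inj. Qed.

Variables (R : realType) (alpha : R).

Lemma sum_payoff_against_alt (t : strat N K) :
  \sum_(j < (2 * m).+1) blotto_payoff alpha t (alt_strat j) =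
  \sum_(k < K) ((minn (2 * m).+1 (val t k))%:R
                + alpha / 2 * ((val t k < (2 * m).+1)%N)%:R).
Proof.
rewrite /blotto_payoff exchange_big; apply: eq_bigr => k _.
under eq_bigr => j _ do rewrite alt_stratE.
rewrite (alt_alloc_rev _ k (fun y => (y < val t k)%N%:R
           + alpha / 2 * ((val t k : nat) == y)%:R)).
by rewrite big_split /= -mulr_sumr -!natr_sum sum_ord_ltn sum_ord_eq.
Qed.

Lemma sum_alloc_tie_bonus (t : strat N K) :
  \sum_(k < K) ((val t k : nat)%:R + alpha / 2) = K%:R * (m%:R + alpha / 2).
Proof.
rewrite big_split /= -natr_sum (eqP (valP t)) sumr_const card_ord -KmN.
by rewrite natrM -mulr_natl; ring.
Qed.

Lemma sum_payoff_against_alt_le (t : strat N K) : 0 <= alpha ->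
  \sum_(j < (2 * m).+1) blotto_payoff alpha t (alt_strat j)
    <= K%:R * (m%:R + alpha / 2).
Proof.
move=> alpha_ge0; rewrite sum_payoff_against_alt -(sum_alloc_tie_bonus t).
apply: ler_sum => k _; apply: lerD; first by rewrite ler_nat geq_minr.
have alpha2_ge0 : 0 <= alpha / 2 by rewrite divr_ge0.
by case: (_ < _)%N; rewrite ?mulr1 ?mulr0.
Qed.

Lemma sum_payoff_alt_against_alt i :
  \sum_(j < (2 * m).+1) blotto_payoff alpha (alt_strat i) (alt_strat j)
    = K%:R * (m%:R + alpha / 2).
Proof.
rewrite sum_payoff_against_alt -(sum_alloc_tie_bonus (alt_strat i)).
apply: eq_bigr => k _.
have i_k_le : (alt_alloc i k < (2 * m).+1)%N by rewrite ltnS alt_alloc_le // -ltnS.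
by rewrite alt_stratE i_k_le mulr1; congr (_%:R + _); apply/minn_idPr/ltnW.
Qed.

Lemma pure_payoff_uniform_S0 (s : strat N K) :
  pure_payoff alpha (uniform_on R (S0 N K m)) s
    = ((2 * m).+1%:R)^-1 * \sum_(j < (2 * m).+1) blotto_payoff alpha s (alt_strat j).
Proof.
rewrite /pure_payoff sum_uniform_on card_S0 S0_alt_strat big_imset //=.
by move=> i j _ _; apply: alt_strat_inj.
Qed.

End AlternatingStrategies.

Arguments card_S0 {N K m}.
Arguments S0_alt_strat {N K m}.
Arguments pure_payoff_uniform_S0 {N K m}.
Arguments sum_payoff_against_alt_le {N K m}.
Arguments sum_payoff_alt_against_alt {N K m}.

Theorem proposition1 (R : realType) (N K : nat) (alpha : R) :
  (1 <= N)%N -> (2 <= K)%N -> ~~ odd K -> (K %| N)%N ->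
  0 <= alpha <= 2 ->
  let m := (N %/ K)%N in
  let sigma0 := uniform_on R (S0 N K m) in
  symmetric_equilibrium_strategy alpha sigma0 /\
  payoffA alpha sigma0 sigma0 = K%:R * ((m%:R + alpha / 2) / (2 * m + 1)%N%:R) /\
  payoffB alpha sigma0 sigma0 = K%:R * ((m%:R + alpha / 2) / (2 * m + 1)%N%:R).
Proof.
move=> _ K_ge2 K_even K_dvd_N /andP[alpha_ge0 _] m sigma0.
have KmN : (K * m)%N = N by rewrite /m mulnC divnK.
have K_gt0 : (0 < K)%N by apply: leq_trans K_ge2.
set v := K%:R * ((m%:R + alpha / 2) / (2 * m + 1)%N%:R).
have value_eq : ((2 * m).+1%:R)^-1 * (K%:R * (m%:R + alpha / 2)) = v.
  by rewrite /v addn1; ring.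
suff [] : [/\ symmetric_equilibrium_strategy alpha sigma0,
    payoffA alpha sigma0 sigma0 = v & payoffB alpha sigma0 sigma0 = v] by [].
apply: symmetric_equilibrium_of_best_reply => [|s|s].
- by apply: uniform_on_mixed; rewrite -card_gt0 (card_S0 KmN K_even K_gt0).
- rewrite (pure_payoff_uniform_S0 KmN K_even K_gt0) -value_eq.
  rewrite ler_wpM2l ?invr_ge0 //.
  exact: sum_payoff_against_alt_le.
- move/uniform_on_supp; rewrite (S0_alt_strat KmN K_even K_gt0) => /imsetP[i _ ->].
  rewrite (pure_payoff_uniform_S0 KmN K_even K_gt0).
  by rewrite (sum_payoff_alt_against_alt KmN K_even K_gt0).
Qed.
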